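(* Let $\alpha=(\alpha_1,\dots,\alpha_n)\in\mathbb{R}^n$ with $\alpha_1,\dots,\alpha_n,1$ linearly independent over $\mathbb{Q}$, and $\ell=n+1$. If $L_\alpha$ is badly approximable, then there is $c>0$ such that there are infinitely many $A\in\mathrm{GL}(\ell,\mathbb{Z})$ with $$\|A(\alpha_1,\dots,\alpha_n,1)^\top\|_\infty<c\,\|A\|_\infty^{-n}.$$
   Context: $L_\alpha(x)=\alpha_1x_1+\cdots+\alpha_nx_n$. For $t\in\mathbb{R}$, $\|t\|$ is the distance to the nearest integer; for a real matrix or vector, $\|\cdot\|_\infty$ is the maximum absolute value of its entries. $L_\alpha$ is badly approximable if there is $c>0$ with $\|L_\alpha(q)\|\ge c\|q\|_\infty^{-n}$ for all nonzero $q\in\mathbb{Z}^n$. *)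

From HB Require Import structures.
From mathcomp Require Import all_boot all_order all_algebra.
From Stdlib Require Import Reals QArith.
Set Implicit Arguments. Unset Strict Implicit. Unset Printing Implicit Defensive.

Open Scope R_scope.

Definition intR (z : int) : R :=
  match z with Posz k => INR k | Negz k => - INR k.+1 end.

(* ||t|| : distance from t to the nearest integer; up t is the integer
   with t < up t <= t + 1, so floor-ish is up t - 1 *)
Definition dist_int (t : R) : R :=
  Rmin (t - IZR (up t - 1)) (IZR (up t) - t).

(* the vector (alpha_1, ..., alpha_n, 1) in R^(n+1) *)
Definition ext_vec (n : nat) (alpha : 'I_n -> R) (i : 'I_n.+1) : R :=
  match (insub (nat_of_ord i) : option 'I_n) with
  | Some j => alpha j
  | None => 1
  end.

Definition Q_lin_indep (n : nat) (alpha : 'I_n -> R) : Prop :=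
  forall q : 'I_n.+1 -> Q,
    \big[Rplus/0]_(i < n.+1) (Q2R (q i) * ext_vec alpha i) = 0 ->
    forall i, q i == 0%Q.

Definition L_form (n : nat) (alpha : 'I_n -> R) (q : 'I_n -> Z) : R :=
  \big[Rplus/0]_(i < n) (alpha i * IZR (q i)).

Definition supnormZ (n : nat) (q : 'I_n -> Z) : R :=
  \big[Rmax/0]_(i < n) Rabs (IZR (q i)).

Definition badly_approximable (n : nat) (alpha : 'I_n -> R) : Prop :=
  exists c : R, 0 < c /\
    forall q : 'I_n -> Z, (exists i, q i <> 0%Z) ->
      dist_int (L_form alpha q) >= c * / (supnormZ q ^ n).

Definition mx_supnorm (l : nat) (A : 'M[int]_l) : R :=
  \big[Rmax/0]_(i < l) \big[Rmax/0]_(j < l) Rabs (intR (A i j)).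

Definition mxvec_supnorm (l : nat) (A : 'M[int]_l) (v : 'I_l -> R) : R :=
  \big[Rmax/0]_(i < l) Rabs (\big[Rplus/0]_(j < l) (intR (A i j) * v j)).

(* For H >= 1 let T_H map x in Z^(n+1) to (x_1/H, ..., x_n/H, H^n (alpha.x' + x_(n+1))).
   The quadratic form |T_H x|^2 has determinant 1, and bad approximability bounds its
   minimum on nonzero integer vectors from below independently of H. Hermite's reduction
   theory, developed first for symmetric forms over an archimedean field (a near-minimal
   first basis vector, Schur complements, Hermite's inequality, existence of reduced
   bases), then gives a unimodular basis of vectors u with |T_H u| bounded independently
   of H. The transpose A of this basis satisfies |A (alpha, 1)^T| = O(H^-n) and
   |A| = O(H), so |A (alpha, 1)^T| |A|^n = O(1). As A (alpha, 1)^T never vanishes for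
   invertible A, any finite list of matrices is avoided by taking H large. *)

From HB Require Import structures.
From mathcomp Require Import all_boot all_order all_algebra.
From Stdlib Require Import Reals QArith ZArith Classical_Prop.
From mathcomp Require Import Rstruct ring lra zify.
Open Scope R_scope.
Local Close Scope Q_scope.

Import Order.TTheory GRing.Theory Num.Theory.

Notation intmx := (map_mx (intmul (GRing.one _))).

Section ReductionTheory.
Set Implicit Arguments. Unset Strict Implicit.
Local Open Scope ring_scope.
Variable R : archiRealFieldType.

Definition qform d (G : 'M[R]_d) (x : 'cV[R]_d) : R := (x^T *m G *m x) 0 0.

Definition form_min_ge d (G : 'M[R]_d) (e : R) : Prop :=
  forall x : 'cV[int]_d, x != 0 -> e <= qform G (intmx x).

Definition e0 d : 'cV[int]_(1 + d) := col_mx 1%:M 0.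

Lemma e0_neq0 d : e0 d != 0.
Proof.
rewrite col_mx_eq0 negb_and; apply/orP; left; apply/eqP => /matrixP/(_ 0 0).
by rewrite !mxE.
Qed.

Lemma qform_e0 d (G : 'M[R]_(1 + d)) : qform G (intmx (e0 d)) = G 0 0.
Proof.
rewrite /qform map_col_mx map_scalar_mx map_mx0 rmorph1 -[in LHS](submxK G).
rewrite tr_col_mx tr_scalar_mx trmx0 mul_row_block mul_row_col mulmx0 addr0.
rewrite mulmx1 mul1mx !mxE big1 ?addr0; last by move=> i _; rewrite mxE mul0r.
by congr (G _ _); apply: val_inj.
Qed.

Lemma qform_basis_change d (G : 'M[R]_d) (U : 'M[int]_d) (x : 'cV[int]_d) :
  qform ((intmx U)^T *m G *m intmx U) (intmx x) = qform G (intmx (U *m x)).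
Proof. by rewrite /qform map_mxM trmx_mul !mulmxA. Qed.

Lemma qformZ d (G : 'M[R]_d) c x : qform G (c *: x) = c ^+ 2 * qform G x.
Proof.
rewrite /qform (_ : (c *: x)^T = c *: x^T); last by apply/matrixP=> i j; rewrite !mxE.
by rewrite -!scalemxAl -scalemxAr !mxE mulrA expr2.
Qed.

Lemma unitmx_mul_neq0 d (U : 'M[int]_d) (x : 'cV[int]_d) :
  U \in unitmx -> x != 0 -> U *m x != 0.
Proof. by move=> uU; apply: contraNneq => Ux0; rewrite -(mulKmx uU x) Ux0 mulmx0. Qed.

Section SchurComplement.
Variables (d : nat) (G : 'M[R]_(1 + d)).
Hypotheses (G_sym : G^T = G) (a_neq0 : G 0 0 != 0).
Let a := G 0 0.
Let b := ursubmx G.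
Definition schur : 'M[R]_d := drsubmx G - a^-1 *: (b^T *m b).

Let ulsubmxE : ulsubmx G = a%:M.
Proof.
by apply/matrixP=> i j; rewrite !ord1 !mxE /= mulr1n /a; congr (G _ _); apply: val_inj.
Qed.

Let dlsubmxE : dlsubmx G = b^T.
Proof. by rewrite /b trmx_ursub G_sym. Qed.

Lemma qform_complete_square (r : R) (y : 'cV[R]_d) :
  qform G (col_mx r%:M y) = a * (r + a^-1 * (b *m y) 0 0) ^+ 2 + qform schur y.
Proof.
rewrite /qform -[in LHS](submxK G) ulsubmxE dlsubmxE tr_col_mx mul_row_block.
rewrite mul_row_col tr_scalar_mx !mulmxDl /schur mulmxBr mulmxBl -scalemxAr.
rewrite -scalemxAl !mulmxA -trmx_mul -(mulmxA _ b y) -(mulmxA _ (ursubmx G) y).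
rewrite !mul_scalar_mx !mul_mx_scalar -/b.
rewrite !mxE !big_ord1 !mxE /= mulr1n.
by field.
Qed.

Lemma schur_sym : schur^T = schur.
Proof. by rewrite /schur linearB /= trmx_drsub G_sym linearZ /= trmx_mul trmxK. Qed.

Lemma det_schur : \det G = a * \det schur.
Proof.
have E : block_mx 1%:M 0 (- a^-1 *: b^T) 1%:M *m G = block_mx a%:M b 0 schur.
  rewrite -[in LHS](submxK G) ulsubmxE dlsubmxE mulmx_block !mul0mx !mul1mx !addr0.
  rewrite scaleNr mulNmx -scalemxAl mul_mx_scalar scalerA mulVf // scale1r addNr.
  by rewrite /schur addrC mulNmx -scalemxAl.
have := congr1 determinant E.
by rewrite det_mulmx det_lblock det_ublock !det_scalar1 det1 !mul1r.
Qed.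

End SchurComplement.

(* Every integer vector is an integer multiple of the first column of a unimodular
   matrix (a consequence of the Smith normal form). *)
Lemma unimodular_first_column d (x : 'cV[int]_(1 + d)) :
  exists (L : 'M[int]_(1 + d)) (c : int), L \in unitmx /\ x = c *: (L *m e0 d).
Proof.
have [L uL [Rm _ [ds _ Ex]]] := int_Smith_normal_form x.
rewrite -mulmxA in Ex.
set w := _ *m Rm in Ex.
exists L, (w 0 0); split => //.
rewrite Ex scalemxAr; congr (_ *m _).
apply/matrixP => i j; rewrite ord1 {j} [in RHS]mxE /w mxE big_ord1 mxE.
rewrite !mxE big_ord1 !mxE; case: splitP => [k ->|k ->]; rewrite ?ord1 !mxE.
  by rewrite mulr1.
by rewrite eqn0Ngt /= mulr0n mul0r mulr0.
Qed.

Lemma near_minimal_vector d (G : 'M[R]_(1 + d)) e : 0 < e -> form_min_ge G e ->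
  exists2 x : 'cV[int]_(1 + d), x != 0 &
    forall y, y != 0 -> qform G (intmx x) <= 2 * qform G (intmx y).
Proof.
move=> e_gt0 Gmin.
suff halving k (x : 'cV[int]_(1 + d)) : x != 0 -> qform G (intmx x) < 2 ^+ k * e ->
    exists2 x : 'cV[int]_(1 + d), x != 0 &
      forall y, y != 0 -> qform G (intmx x) <= 2 * qform G (intmx y).
  pose k := Num.bound (qform G (intmx (e0 d)) / e).
  have := upper_nthrootP (leqnn k); rewrite ltr_pdivrMr // => lt_k.
  exact: halving _ _ (e0_neq0 d) lt_k.
elim: k x => [|k IH] x x_neq0 lt_x.
  by move: lt_x; rewrite expr0 mul1r => lt_x; have := Gmin x x_neq0; rewrite leNgt lt_x.
have [[y [y_neq0 lt_y]]|no_smaller] :=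
  classic (exists y, y != 0 /\ 2 * qform G (intmx y) < qform G (intmx x)).
  by apply: (IH y y_neq0); move: lt_x; rewrite exprS -mulrA; lra.
exists x => // y y_neq0; rewrite leNgt; apply/negP => lt_y.
by apply: no_smaller; exists y.
Qed.

Lemma unimodular_near_minimal d (G : 'M[R]_(1 + d)) e : 0 < e -> form_min_ge G e ->
  exists2 U : 'M[int]_(1 + d), U \in unitmx &
    forall y, y != 0 -> qform G (intmx (U *m e0 d)) <= 2 * qform G (intmx y).
Proof.
move=> e_gt0 Gmin; have [x x_neq0 x_min] := near_minimal_vector e_gt0 Gmin.
have [L [c [uL Ex]]] := unimodular_first_column x.
exists L => // y y_neq0.
have c_neq0 : c != 0 by apply: contraNneq x_neq0 => c0; rewrite Ex c0 scale0r.
have c2_ge1 : 1 <= (c%:~R : R) ^+ 2 by rewrite -rmorphXn ler1z; move: c_neq0; lia.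
have Le0_pos : 0 < qform G (intmx (L *m e0 d)).
  by apply: lt_le_trans e_gt0 (Gmin _ _); apply: unitmx_mul_neq0 => //; exact: e0_neq0.
have := x_min y y_neq0; rewrite Ex map_mxZ qformZ; nra.
Qed.

Definition nearest_int (t : R) : int := Num.floor (t + 1 / 2).

Lemma nearest_int_sqr (t : R) : (t - (nearest_int t)%:~R) ^+ 2 <= 1 / 4.
Proof.
have := floor_itv (t + 1 / 2); rewrite intrD /nearest_int.
by set f := (Num.floor _)%:~R => /andP[lo hi]; nra.
Qed.

Lemma sqr_det_unimodular d (U : 'M[int]_d) :
  U \in unitmx -> (\det (intmx U : 'M[R]_d)) ^+ 2 = 1.
Proof.
rewrite unitmxE => /orP[] /eqP det_U; rewrite det_map_mx det_U /=.
  by rewrite rmorph1 expr1n.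
by rewrite rmorphN rmorph1 sqrrN expr1n.
Qed.

Lemma reduction_step d (G : 'M[R]_(1 + d)) e : G^T = G -> 0 < e -> form_min_ge G e ->
  exists (U : 'M[int]_(1 + d)) (a : R) (S : 'M[R]_d) (shift : 'cV[int]_d -> int),
  [/\ U \in unitmx, e <= a, qform G (intmx (U *m e0 d)) = a, S^T = S
    & \det G = a * \det S] /\
  [/\ form_min_ge S (a / 4)
    & forall y, qform G (intmx (U *m col_mx (shift y)%:M y)) <= a / 4 + qform S (intmx y)].
Proof.
move=> G_sym e_gt0 Gmin.
have [U uU U_min] := unimodular_near_minimal e_gt0 Gmin.
set G' := (intmx U)^T *m G *m intmx U.
have G'_sym : G'^T = G' by rewrite /G' !trmx_mul trmxK G_sym mulmxA.
set a := G' 0 0.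
have Ea : qform G (intmx (U *m e0 d)) = a by rewrite -qform_basis_change qform_e0.
have e_le_a : e <= a.
  by rewrite -Ea; apply: Gmin; apply: unitmx_mul_neq0 => //; exact: e0_neq0.
have a_gt0 : 0 < a := lt_le_trans e_gt0 e_le_a.
have a_neq0 : a != 0 by rewrite gt_eqF.
set t := fun y : 'cV[int]_d => a^-1 * (ursubmx G' *m intmx y) 0 0.
set shift := fun y => - nearest_int (t y).
have shift_bound y :
    qform G (intmx (U *m col_mx (shift y)%:M y)) <= a / 4 + qform (schur G') (intmx y).
  rewrite -qform_basis_change map_col_mx map_scalar_mx qform_complete_square //.
  have := nearest_int_sqr (t y); rewrite /shift rmorphN /= -/a -/(t y).
  set u := (nearest_int _)%:~R; rewrite (_ : - u + t y = t y - u); last by ring.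
  by set s := (_ - _) ^+ 2 => s_le; nra.
exists U, a, (schur G'), shift; split; split => //.
- exact: schur_sym.
- rewrite -det_schur // /G' !det_mulmx det_tr mulrC mulrA -expr2.
  by rewrite sqr_det_unimodular // mul1r.
- move=> y y_neq0.
  have x_neq0 : col_mx (shift y)%:M y != 0 by rewrite col_mx_eq0 negb_and y_neq0 orbT.
  have := U_min _ (unitmx_mul_neq0 uU x_neq0); rewrite Ea.
  have := shift_bound y; lra.
Qed.

(* A (non-optimal) Hermite constant: gamma_(d+1) = 4^d gamma_d, gamma_0 = 1. *)
Fixpoint hermite_const d : R := if d is d'.+1 then 4 ^+ d' * hermite_const d' else 1.

Lemma hermite_const_gt0 d : 0 < hermite_const d.
Proof. by elim: d => [|d IH] //=; rewrite mulr_gt0 // exprn_gt0. Qed.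

Lemma pivot_bound d (a detS : R) : 0 < a ->
  (a / 4) ^+ d <= hermite_const d * detS ->
  a ^+ d.+1 <= hermite_const d.+1 * (a * detS).
Proof.
move=> a_gt0; rewrite expr_div_n ler_pdivrMr ?exprn_gt0 // => bound_S.
rewrite exprS /= (_ : _ * (a * detS) = a * (hermite_const d * detS * 4 ^+ d)); last by ring.
by rewrite ler_pM2l.
Qed.

Lemma hermite_inequality d (G : 'M[R]_d) e : G^T = G -> 0 < e -> form_min_ge G e ->
  e ^+ d <= hermite_const d * \det G.
Proof.
elim: d G e => [|d IH] G e G_sym e_gt0 Gmin; first by rewrite det_mx00 mulr1.
have [U [a [S [shift [[_ e_le_a _ S_sym detG] [Smin _]]]]]] :=
  reduction_step G_sym e_gt0 Gmin.
have a_gt0 : 0 < a := lt_le_trans e_gt0 e_le_a.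
have := pivot_bound a_gt0 (IH S _ S_sym (divr_gt0 a_gt0 (ltr0n _ 4)) Smin).
rewrite -detG; apply: le_trans; rewrite lerXn2r // nnegrE ltW //.
Qed.

Lemma reduced_basis d (e D : R) : 0 < e -> exists F : R,
  forall G : 'M[R]_d, G^T = G -> form_min_ge G e -> \det G <= D ->
  exists2 U : 'M[int]_d, U \in unitmx & forall i, qform G (intmx (col i U)) <= F.
Proof.
elim: d e D => [|d IH] e D e_gt0.
  by exists 0 => G _ _ _; exists 1%:M => [|[]]; first exact: unitmx1.
have [F' F'_basis] := IH (e / 4) (D / e) (divr_gt0 e_gt0 (ltr0n _ 4)).
exists (Num.max 1 (hermite_const d.+1 * D) + Num.max 0 F') => G G_sym Gmin detG_le.
have [U [a [S [shift [[uU e_le_a Ue0 S_sym detG] [Smin shift_bound]]]]]] :=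
  reduction_step G_sym e_gt0 Gmin.
have a_gt0 : 0 < a := lt_le_trans e_gt0 e_le_a.
have hermite_S := hermite_inequality S_sym (divr_gt0 a_gt0 (ltr0n _ 4)) Smin.
have detS_ge0 : 0 <= \det S.
  have := le_trans (exprn_ge0 d (ltW (divr_gt0 a_gt0 (ltr0n _ 4)))) hermite_S.
  by rewrite pmulr_rge0 // hermite_const_gt0.
have a_le : a <= Num.max 1 (hermite_const d.+1 * D).
  have a_pow : a ^+ d.+1 <= hermite_const d.+1 * D.
    apply: le_trans (pivot_bound a_gt0 hermite_S) _; rewrite -detG ler_pM2l //.
    exact: hermite_const_gt0.
  have [a_le1|a_gt1] := lerP a 1; first by apply: le_trans a_le1 _; rewrite le_max lexx.
  rewrite le_max; apply/orP; right; apply: le_trans _ a_pow.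
  by rewrite ler_eXnr // ltW.
have Smin' : form_min_ge S (e / 4) by move=> y y_neq0; have := Smin y y_neq0; lra.
have detS_le : \det S <= D / e by rewrite ler_pdivlMr // -[_ * e]mulrC; nra.
have [V uV V_bound] := F'_basis S S_sym Smin' detS_le.
set W : 'M[int]_(1 + d) := block_mx 1%:M (\row_j shift (col j V)) 0 V.
have uW : W \in unitmx by rewrite unitmxE det_ublock det1 mul1r -unitmxE.
exists (U *m W) => [|i]; first by rewrite unitmx_mul uU uW.
rewrite colE -mulmxA -colE /W block_mxEh.
case: (@split_ordP 1 d i) => [j ->|j ->].
  rewrite (@colKl _ _ 1 d) col_col_mx ord1.
  rewrite (_ : col 0 (1%:M : 'M[int]_1) = 1%:M); last by apply/matrixP=> k l; rewrite !ord1 !mxE.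
  rewrite (_ : col 0 (0 : 'M[int]_(d, 1)) = 0); last by apply/matrixP=> k l; rewrite !mxE.
  by rewrite -/(e0 d) Ue0; apply: le_trans a_le _; rewrite lerDl le_max lexx.
rewrite (@colKr _ _ 1 d) col_col_mx.
rewrite (_ : col j (\row_j shift (col j V)) = (shift (col j V))%:M); last first.
  by apply/matrixP=> k l; rewrite !ord1 !mxE.
apply: le_trans (shift_bound _) _; have := V_bound j.
have : F' <= Num.max 0 F' by rewrite le_max lexx orbT.
lra.
Qed.

End ReductionTheory.

Section OrderedFieldFacts.
Set Implicit Arguments. Unset Strict Implicit.
Local Open Scope ring_scope.
Variable F : realFieldType.

Lemma sqr_le_sumsqr m (u : 'I_m -> F) (a : F) k (a_ge0 : 0 <= a) (a_le : a <= `|u k|) :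
  a ^+ 2 <= \sum_i u i ^+ 2.
Proof.
rewrite (bigD1 k) //= -(real_normK (num_real (u k))).
apply: ler_wpDr; first by apply: sumr_ge0 => i _; exact: sqr_ge0.
by rewrite lerXn2r // nnegrE (le_trans a_ge0).
Qed.

Lemma abs_le_sumsqr m (u : 'I_m -> F) (B : F) k (sum_le : \sum_i u i ^+ 2 <= B) :
  `|u k| <= Num.max 1 B.
Proof.
rewrite le_max; have [//|u_gt1] := lerP `|u k| 1.
apply/orP; right; apply: le_trans sum_le.
apply: le_trans (_ : u k ^+ 2 <= _); last first.
  by rewrite (bigD1 k) //= lerDl; apply: sumr_ge0 => i _; exact: sqr_ge0.
rewrite -(real_normK (num_real (u k))) expr2 ler_peMr // ltW //.
Qed.

Lemma finite_pos_lower_bound (T : eqType) (P : pred T) (f : T -> F) (s : seq T) :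
  (forall x, P x -> 0 < f x) -> exists2 d, 0 < d & forall x, x \in s -> P x -> d <= f x.
Proof.
move=> f_pos; elim: s => [|y s [d d_gt0 d_le]]; first by exists 1.
have [Py|nPy] := boolP (P y).
  exists (Num.min d (f y)); first by rewrite lt_min d_gt0 f_pos.
  move=> x; rewrite inE => /orP[/eqP -> _|x_s Px]; first by rewrite ge_min lexx orbT.
  by rewrite ge_min d_le.
exists d => // x; rewrite inE => /orP[/eqP -> Py|]; [by rewrite Py in nPy|exact: d_le].
Qed.

Lemma approx_product_bound n (K H v m : F) : 1 <= H -> v <= K / H ^+ n ->
  1 <= m -> m <= K * H -> v < 2 * K ^+ n.+1 / m ^+ n.
Proof.
move=> H_ge1 v_le m_ge1 m_le.
have H_gt0 : 0 < H := lt_le_trans ltr01 H_ge1.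
have m_gt0 : 0 < m := lt_le_trans ltr01 m_ge1.
have K_gt0 : 0 < K by rewrite -(pmulr_lgt0 _ H_gt0) (lt_le_trans m_gt0).
rewrite ltr_pdivlMr ?exprn_gt0 //; apply: le_lt_trans (_ : v * m ^+ n <= K ^+ n.+1) _.
  apply: le_trans (ler_wpM2r (exprn_ge0 _ (ltW m_gt0)) v_le) _.
  apply: le_trans (ler_wpM2l (divr_ge0 (ltW K_gt0) (exprn_ge0 _ (ltW H_gt0))) _) _.
    by apply: lerXn2r m_le; rewrite nnegrE ?mulr_ge0 // ltW.
  by rewrite exprMn exprS mulrA mulrAC mulfVK // expf_neq0 // gt_eqF.
by rewrite ltr_pMl ?exprn_gt0 // ltr1n.
Qed.

Lemma pow_inv_small n (K d : F) : (0 < n)%nat -> 0 <= K -> 0 < d -> K / (K / d + 1) ^+ n < d.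
Proof.
move=> n_gt0 K_ge0 d_gt0.
have H_ge1 : 1 <= K / d + 1 by rewrite lerDr divr_ge0 // ltW.
have H_gt0 : 0 < K / d + 1 := lt_le_trans ltr01 H_ge1.
apply: le_lt_trans (_ : K / (K / d + 1) ^+ n <= K / (K / d + 1)) _.
  by rewrite ler_wpM2l // lef_pV2 ?posrE ?exprn_gt0 // ler_eXnr.
rewrite ltr_pdivrMr // mulrDr mulrCA divff ?gt_eqF // !mulr1 ltrDl //.
Qed.

End OrderedFieldFacts.

Section StdlibReals.
Set Implicit Arguments. Unset Strict Implicit.
Local Open Scope ring_scope.

Lemma big_RplusE k (F : 'I_k -> R) : \big[Rplus/0%R]_(i < k) F i = \sum_(i < k) F i.
Proof. by []. Qed.

Lemma intRE (z : int) : intR z = z%:~R.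
Proof. by case: z => k; rewrite /intR INRE ?NegzE ?mulrNz. Qed.

Lemma big_Rmax_ge k (F : 'I_k -> R) i : F i <= \big[Rmax/0%R]_(j < k) F j.
Proof.
have : i \in index_enum 'I_k by rewrite mem_index_enum.
rewrite unlock; elim: (index_enum _) => // j s IH.
by rewrite inE => /orP[/eqP <-|/IH le_i] /=; rewrite RmaxE le_max ?lexx ?le_i ?orbT.
Qed.

Lemma big_Rmax_le k (F : 'I_k -> R) B : 0 <= B -> (forall j, F j <= B) ->
  \big[Rmax/0%R]_(j < k) F j <= B.
Proof. by move=> B_ge0 le_B; elim/big_ind: _ => // x y; rewrite RmaxE ge_max => -> ->. Qed.

Definition int_to_Z (z : int) : Z :=
  match z with Posz k => Z.of_nat k | Negz k => (- Z.of_nat k.+1)%Z end.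

Lemma IZR_int_to_Z (z : int) : IZR (int_to_Z z) = z%:~R.
Proof. by case: z => k; rewrite /int_to_Z ?opp_IZR -INR_IZR_INZ INRE ?NegzE ?mulrNz. Qed.

Lemma int_to_Z_eq0 (z : int) : int_to_Z z = 0%Z -> z = 0.
Proof. by case: z => k /=; lia. Qed.

Lemma dist_int_le (t : R) (z : Z) : dist_int t <= `|t + IZR z|.
Proof.
have [/RltP up_gt /RleP up_le] := archimed t.
rewrite /dist_int RminE minus_IZR ge_min !ler_normr.
rewrite !RminusE ?R1E in up_le *.
have [z_le|z_gt] := Z_le_gt_dec (- z) (up t - 1).
  have /RleP := IZR_le _ _ z_le; rewrite opp_IZR minus_IZR RoppE RminusE R1E => z_le'.
  by apply/orP; left; apply/orP; left; lra.
have /RleP := IZR_le (up t) (- z) ltac:(lia); rewrite opp_IZR RoppE => z_ge.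
by apply/orP; right; apply/orP; right; lra.
Qed.

Lemma ext_vec_widen n (alpha : 'I_n -> R) (j : 'I_n) :
  ext_vec alpha (widen_ord (leqnSn n) j) = alpha j.
Proof. by rewrite /ext_vec (_ : nat_of_ord (widen_ord _ j) = val j) // valK. Qed.

Lemma ext_vec_max n (alpha : 'I_n -> R) : ext_vec alpha ord_max = 1.
Proof. by rewrite /ext_vec insubF //= ltnn. Qed.

Lemma badly_approximableE n (alpha : 'I_n -> R) : badly_approximable alpha ->
  exists2 cb : R, 0 < cb & forall q : 'I_n -> Z, (exists i, q i <> 0%Z) ->
    cb / supnormZ q ^+ n <= dist_int (L_form alpha q).
Proof.
move=> [cb [/RltP cb_gt0 bad]]; exists cb => // q q_neq0.
by have /Rge_le/RleP := bad q q_neq0; rewrite RmultE RinvE RpowE.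
Qed.

Lemma mx_supnorm_ge1 l (A : 'M[int]_l.+1) : A \in unitmx -> 1 <= mx_supnorm A.
Proof.
move=> uA; have [i [j Aij_neq0]] : exists i j, A i j != 0.
  apply: NNPP => no_entry; move: uA; rewrite (_ : A = 0) ?unitmxE ?det0 ?unitr0 //.
  apply/matrixP => i j; rewrite mxE; apply/eqP/negPn/negP => Aij_neq0.
  by apply: no_entry; exists i, j.
apply: le_trans (big_Rmax_ge _ i); apply: le_trans (big_Rmax_ge _ j).
by rewrite intRE RabsE -intr_norm ler1z; move: Aij_neq0; lia.
Qed.

End StdlibReals.

Section BadlyApproximableForm.
Set Implicit Arguments. Unset Strict Implicit.
Local Open Scope ring_scope.
Variables (n : nat) (alpha : 'I_n -> R) (cb : R).
Hypothesis cb_gt0 : 0 < cb.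
Hypothesis alpha_bad : forall q : 'I_n -> Z, (exists i, q i <> 0%Z) ->
  cb / supnormZ q ^+ n <= dist_int (L_form alpha q).

Let widen (k : 'I_n) : 'I_n.+1 := widen_ord (leqnSn n) k.

Let lift_max (k : 'I_n) : lift ord_max k = widen k.
Proof. by apply: val_inj; rewrite /= /bump leqNgt ltn_ord. Qed.

Definition ext_form (x : 'cV[int]_n.+1) : R := \sum_j (x j 0)%:~R * ext_vec alpha j.

Definition head_coords (x : 'cV[int]_n.+1) : 'I_n -> Z := fun k => int_to_Z (x (widen k) 0).

Lemma ext_form_split (x : 'cV[int]_n.+1) :
  ext_form x = L_form alpha (head_coords x) + IZR (int_to_Z (x ord_max 0)).
Proof.
rewrite /ext_form big_ord_recr /= ext_vec_max mulr1 IZR_int_to_Z; congr (_ + _).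
rewrite /L_form big_RplusE; apply: eq_bigr => j _.
by rewrite ext_vec_widen /head_coords IZR_int_to_Z RmultE mulrC.
Qed.

Lemma ext_form_head_bound (x : 'cV[int]_n.+1) (k : 'I_n) : x (widen k) 0 != 0 ->
  1 <= supnormZ (head_coords x) /\
  cb / supnormZ (head_coords x) ^+ n <= `|ext_form x|.
Proof.
move=> xk_neq0; split.
  apply: le_trans (big_Rmax_ge (fun j => Rabs (IZR (head_coords x j))) k).
  by rewrite /= RabsE /head_coords IZR_int_to_Z -intr_norm ler1z; move: xk_neq0; lia.
apply: le_trans (alpha_bad _) _.
  by exists k; rewrite /head_coords => /int_to_Z_eq0 /eqP; apply/negP.
by rewrite ext_form_split; exact: dist_int_le.
Qed.

(* Otherwise ext_form x is the nonzero integer x_(n+1). *)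
Lemma ext_form_last_bound (x : 'cV[int]_n.+1) : x != 0 -> (forall k, x (widen k) 0 = 0) ->
  1 <= `|ext_form x|.
Proof.
move=> x_neq0 head0.
have ext_formE : ext_form x = (x ord_max 0)%:~R.
  rewrite /ext_form big_ord_recr /= ext_vec_max mulr1 big1 ?add0r // => k _.
  by rewrite -/(widen k) head0 mul0r.
have last_neq0 : x ord_max 0 != 0.
  apply: contraNneq x_neq0 => last0; apply/eqP/matrixP => j i; rewrite ord1 mxE.
  by case: (unliftP ord_max j) => [k ->|->] //; rewrite lift_max head0.
by rewrite ext_formE -intr_norm ler1z; move: last_neq0; lia.
Qed.

Lemma ext_form_neq0 (x : 'cV[int]_n.+1) : x != 0 -> ext_form x != 0.
Proof.
move=> x_neq0; rewrite -normr_gt0.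
have [[k xk_neq0]|head0] := classic (exists k, x (widen k) 0 != 0).
  have [M_ge1 bound] := ext_form_head_bound xk_neq0.
  by apply: lt_le_trans bound; rewrite divr_gt0 // exprn_gt0 // (lt_le_trans ltr01).
apply: lt_le_trans ltr01 (ext_form_last_bound x_neq0 _) => k.
by apply/eqP/negPn/negP => xk_neq0; apply: head0; exists k.
Qed.

Definition scaling_mx (H : R) : 'M[R]_n.+1 :=
  \matrix_(k, j) (if (k < n)%nat then (k == j)%:R / H else H ^+ n * ext_vec alpha j).

Lemma scaling_mxE H (x : 'cV[int]_n.+1) k : (scaling_mx H *m intmx x) k 0 =
  if (k < n)%nat then (x k 0)%:~R / H else H ^+ n * ext_form x.
Proof.
rewrite mxE; case: ifP => k_lt.
  rewrite (bigD1 k) //= big1 ?addr0; first by rewrite !mxE k_lt eqxx mul1r mulrC.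
  by move=> j /negPf j_neq; rewrite !mxE k_lt eq_sym j_neq !mul0r.
rewrite /ext_form mulr_sumr; apply: eq_bigr => j _; rewrite !mxE k_lt; ring.
Qed.

Lemma qform_scaling H (x : 'cV[int]_n.+1) :
  qform ((scaling_mx H)^T *m scaling_mx H) (intmx x) =
  \sum_k ((scaling_mx H *m intmx x) k 0) ^+ 2.
Proof.
rewrite /qform !mulmxA -trmx_mul -mulmxA mxE.
by apply: eq_bigr => k _; rewrite mxE expr2.
Qed.

Lemma det_scaling_mx H : H != 0 -> \det (scaling_mx H) = 1.
Proof.
move=> H_neq0; rewrite det_trig; last first.
  apply/is_trig_mxP => i j lt_ij; rewrite mxE.
  case: ifP => [_|/negbT]; last by move: (ltn_ord j) lt_ij; rewrite -leqNgt; lia.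
  by rewrite (_ : (i == j) = false) ?mul0r //; apply/eqP => eq_ij; rewrite eq_ij ltnn in lt_ij.
rewrite big_ord_recr /= mxE ltnn ext_vec_max mulr1.
rewrite (eq_bigr (fun _ => H^-1)); last by move=> i _; rewrite mxE /= ltn_ord eqxx mul1r.
by rewrite prodr_const card_ord -exprMn mulVf // expr1n.
Qed.

(* Bad approximability makes the minimum of |T_H x|^2 over nonzero integer vectors
   bounded below uniformly in H >= 1: either a head coordinate of x is at least H, or
   H^n |ext_form x| >= H^n cb / M^n >= cb where M <= H is the size of the head. *)
Lemma form_min_scaling H : 1 <= H ->
  form_min_ge ((scaling_mx H)^T *m scaling_mx H) (Num.min 1 cb ^+ 2).
Proof.
move=> H_ge1 x x_neq0; rewrite qform_scaling.
have H_gt0 : 0 < H := lt_le_trans ltr01 H_ge1.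
have Hn_ge1 : 1 <= H ^+ n := exprn_ege1 n H_ge1.
have ka_ge0 : 0 <= Num.min 1 cb by rewrite le_min ler01 ltW.
have [[k H_le]|small_head] := classic (exists k, H <= `|(x (widen k) 0)%:~R : R|).
  apply: (sqr_le_sumsqr (k := widen k) ka_ge0); rewrite scaling_mxE /= ltn_ord.
  rewrite normrM normfV (gtr0_norm H_gt0) ler_pdivlMr // (le_trans _ H_le) //.
  by rewrite ler_piMl ?(ltW H_gt0) // ge_min lexx.
apply: (sqr_le_sumsqr (k := ord_max) ka_ge0); rewrite scaling_mxE /= ltnn.
rewrite normrM (gtr0_norm (exprn_gt0 _ H_gt0)).
have [[k xk_neq0]|head0] := classic (exists k, x (widen k) 0 != 0).
  have [M_ge1 bound] := ext_form_head_bound xk_neq0.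
  set M := supnormZ _ in M_ge1 bound.
  have M_gt0 : 0 < M := lt_le_trans ltr01 M_ge1.
  have M_le_H : M <= H.
    apply: big_Rmax_le (ltW H_gt0) _ => j; rewrite RabsE IZR_int_to_Z.
    by rewrite leNgt; apply/negP => lt_H; apply: small_head; exists j; exact: ltW.
  apply: le_trans (ler_wpM2l (ltW (exprn_gt0 _ H_gt0)) bound).
  apply: (@le_trans _ _ cb); first by rewrite ge_min lexx orbT.
  rewrite mulrCA ler_pMr // ler_pdivlMr ?exprn_gt0 // mul1r.
  by rewrite lerXn2r // nnegrE ltW.
have head0' k : x (widen k) 0 = 0.
  by apply/eqP/negPn/negP => xk_neq0; apply: head0; exists k.
apply: (@le_trans _ _ 1); first by rewrite ge_min lexx.
apply: le_trans Hn_ge1 _; rewrite ler_peMr ?exprn_ge0 ?(ltW H_gt0) //.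
exact: ext_form_last_bound x_neq0 head0'.
Qed.

Lemma short_vector_bounds H B (u : 'cV[int]_n.+1) : 1 <= H ->
  qform ((scaling_mx H)^T *m scaling_mx H) (intmx u) <= B ->
  (forall k, `|(u k 0)%:~R : R| <= (1 + \sum_j `|alpha j|) * Num.max 1 B * H) /\
  `|ext_form u| <= Num.max 1 B / H ^+ n.
Proof.
rewrite qform_scaling => H_ge1 sum_le.
set S := Num.max 1 B.
have H_gt0 : 0 < H := lt_le_trans ltr01 H_ge1.
have Hn_gt0 : 0 < H ^+ n := exprn_gt0 n H_gt0.
have S_ge0 : 0 <= S by rewrite le_max ler01.
have coord_le k := abs_le_sumsqr k sum_le.
have ext_form_le : `|ext_form u| <= S / H ^+ n.
  have := coord_le ord_max; rewrite scaling_mxE /= ltnn normrM (gtr0_norm Hn_gt0).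
  by rewrite ler_pdivlMr // mulrC.
have head_le (k : 'I_n) : `|(u (widen k) 0)%:~R : R| <= S * H.
  have := coord_le (widen k); rewrite scaling_mxE /= ltn_ord.
  by rewrite normrM normfV (gtr0_norm H_gt0) ler_pdivrMr.
have alpha_ge0 : 0 <= \sum_j `|alpha j| by apply: sumr_ge0 => j _; exact: normr_ge0.
split => // k; rewrite -mulrA mulrDl mul1r.
case: (unliftP ord_max k) => [j ->|->].
  rewrite lift_max; apply: le_trans (head_le j) _; rewrite lerDl.
  by rewrite !mulr_ge0 // ltW.
have -> : (u ord_max 0)%:~R =
    ext_form u - \sum_(j < n) (u (widen j) 0)%:~R * alpha j.
  rewrite /ext_form big_ord_recr /= ext_vec_max mulr1 addrC.
  by under eq_bigr do rewrite ext_vec_widen; rewrite addrK.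
apply: le_trans (ler_normB _ _) (lerD _ _).
  apply: le_trans ext_form_le _; apply: (@le_trans _ _ S).
    by rewrite ler_pdivrMr // ler_peMr // exprn_ege1.
  by rewrite ler_peMr.
apply: le_trans (ler_norm_sum _ _ _) _; rewrite mulr_suml; apply: ler_sum => j _.
by rewrite normrM mulrC ler_wpM2l.
Qed.

Lemma mxvec_entryE (A : 'M[int]_n.+1) i :
  Rabs (\big[Rplus/0%R]_(j < n.+1) (intR (A i j) * ext_vec alpha j)) =
  `|ext_form (row i A)^T|.
Proof.
rewrite RabsE big_RplusE /ext_form; congr `|_|.
by apply: eq_bigr => j _; rewrite intRE !mxE.
Qed.

Lemma mxvec_supnorm_gt0 (A : 'M[int]_n.+1) : A \in unitmx ->
  0 < mxvec_supnorm A (ext_vec alpha).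
Proof.
move=> uA; rewrite /mxvec_supnorm; apply: lt_le_trans (big_Rmax_ge _ 0).
rewrite mxvec_entryE normr_gt0; apply: ext_form_neq0.
rewrite tr_row colE; apply: unitmx_mul_neq0; first by rewrite unitmx_tr.
by apply/negP => /eqP/matrixP/(_ 0 0); rewrite !mxE.
Qed.

(* Indeed the forms
   |T_H x|^2 have determinant 1 and minimum bounded below uniformly in H, so a reduced
   basis U of them has uniformly bounded vectors; A is U^T. *)
Lemma good_unimodular_matrices : exists2 K : R, 1 <= K & forall H, 1 <= H ->
  exists2 A : 'M[int]_n.+1, A \in unitmx &
    mxvec_supnorm A (ext_vec alpha) <= K / H ^+ n /\ mx_supnorm A <= K * H.
Proof.
have min_gt0 : 0 < Num.min 1 cb ^+ 2 by rewrite exprn_gt0 // lt_min ltr01 cb_gt0.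
have [B B_basis] := reduced_basis n.+1 1 min_gt0.
set S := Num.max 1 B; set K := (1 + \sum_j `|alpha j|) * S.
have S_ge1 : 1 <= S by rewrite le_max lexx.
have S_le_K : S <= K.
  by rewrite ler_peMl ?(le_trans ler01) // lerDl sumr_ge0 // => j _; exact: normr_ge0.
exists K => [|H H_ge1]; first exact: le_trans S_ge1 S_le_K.
have H_gt0 : 0 < H := lt_le_trans ltr01 H_ge1.
have G_sym : ((scaling_mx H)^T *m scaling_mx H)^T = (scaling_mx H)^T *m scaling_mx H.
  by rewrite trmx_mul trmxK.
have detG_le : \det ((scaling_mx H)^T *m scaling_mx H) <= 1.
  by rewrite det_mulmx det_tr det_scaling_mx ?gt_eqF // mulr1.
have [U uU U_short] := B_basis _ G_sym (form_min_scaling H_ge1) detG_le.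
have col_bounds i := short_vector_bounds H_ge1 (U_short i).
exists U^T; first by rewrite unitmx_tr.
have K_ge0 : 0 <= K := le_trans ler01 (le_trans S_ge1 S_le_K).
split; apply: big_Rmax_le => [|i].
- by rewrite divr_ge0 // exprn_ge0 // ltW.
- rewrite mxvec_entryE tr_row trmxK; apply: le_trans (col_bounds i).2 _.
  by rewrite ler_pM2r // invr_gt0 exprn_gt0.
- by rewrite mulr_ge0 // ltW.
apply: big_Rmax_le => [|j]; first by rewrite mulr_ge0 // ltW.
by have := (col_bounds i).1 j; rewrite intRE RabsE !mxE.
Qed.

End BadlyApproximableForm.

Section MainResult.
Local Open Scope ring_scope.

(* The theorem in MathComp notation: infinitely many unimodular A satisfy
   |A (alpha, 1)^T| < c |A|^-n, since for a finite list s of matrices the vectors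
   A (alpha, 1)^T (A in s invertible) are bounded away from 0, while the matrices of
   good_unimodular_matrices for large H make it arbitrarily small. *)
Lemma infinitely_many_good_matrices n (alpha : 'I_n -> R) : (0 < n)%nat ->
  badly_approximable alpha ->
  exists2 c : R, 0 < c & forall s : seq 'M[int]_n.+1,
    exists2 A : 'M[int]_n.+1, A \in unitmx /\ A \notin s &
      mxvec_supnorm A (ext_vec alpha) < c / mx_supnorm A ^+ n.
Proof.
move=> n_gt0 /badly_approximableE [cb cb_gt0 alpha_bad].
have [K K_ge1 good] := good_unimodular_matrices cb_gt0 alpha_bad.
have K_gt0 : 0 < K := lt_le_trans ltr01 K_ge1.
exists (2 * K ^+ n.+1) => [|s]; first by rewrite mulr_gt0 // exprn_gt0.
pose P (A : 'M[int]_n.+1) := A \in unitmx.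
have [d d_gt0 d_le] := finite_pos_lower_bound (P := P) s
  (fun A => @mxvec_supnorm_gt0 n alpha cb cb_gt0 alpha_bad A).
have H_ge1 : 1 <= K / d + 1 by rewrite lerDr divr_ge0 // ltW.
have [A uA [v_le m_le]] := good _ H_ge1.
exists A; last exact: approx_product_bound H_ge1 v_le (mx_supnorm_ge1 uA) m_le.
split=> //; apply/negP => A_s; have := d_le A A_s uA; rewrite leNgt.
by rewrite (le_lt_trans v_le (pow_inv_small n_gt0 (ltW K_gt0) d_gt0)).
Qed.

End MainResult.

Theorem mainTheorem8 (n : nat) (hn : (0 < n)%nat) (alpha : 'I_n -> R) :
  Q_lin_indep alpha ->
  badly_approximable alpha ->
  exists c : R, 0 < c /\
    forall s : seq 'M[int]_(n.+1),
      exists A : 'M[int]_(n.+1),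
        A \in unitmx /\ A \notin s /\
        mxvec_supnorm A (ext_vec alpha) < c * / (mx_supnorm A ^ n).
Proof.
move=> _ /(infinitely_many_good_matrices hn) [c /RltP c_gt0 good].
exists c; split => // s; have [A [uA A_s] A_good] := good s.
by exists A; split => //; split => //; apply/RltP; rewrite RmultE RinvE RpowE.
Qed.
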